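(* Let $M$ be a finitely generated monoid which is quasi-isometric to a finitely generated group. Then $M$ is a group.
   Context: For a monoid $S$ generated by a finite set $A$, $d_A(x,y)=\inf\{|w|:w\in A^*,\ xw=y\}$ ($A^*$ the free monoid on $A$, $\inf\emptyset=\infty$). A map $f:(S,d_A)\to(T,d_B)$ is a quasi-isometry if there are $1\le\lambda<\infty$, $0<\epsilon<\infty$, $0\le\mu<\infty$ with $\frac1\lambda d_A(x,y)-\epsilon\le d_B(f(x),f(y))\le\lambda d_A(x,y)+\epsilon$ for all $x,y$, and for each $t\in T$ some $x\in S$ with $\max(d_B(t,f(x)),d_B(f(x),t))\le\mu$. Finitely generated monoids (groups being regarded as monoids) $S,T$ are quasi-isometric if $(S,d_A)$, $(T,d_B)$ are quasi-isometric for some finite (monoid) generating sets $A,B$. *)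

From HB Require Import structures.
From mathcomp Require Import all_boot all_order all_algebra.
From mathcomp Require Import all_classical all_reals ereal.
From Stdlib Require Import List.
Set Implicit Arguments. Unset Strict Implicit. Unset Printing Implicit Defensive.
Import Order.TTheory GRing.Theory Num.Theory.
Local Open Scope classical_set_scope.
Local Open Scope ereal_scope.

Record Mnd := {
  carrier :> Type;
  mmul : carrier -> carrier -> carrier;
  mone : carrier;
  mmulA : forall x y z, mmul x (mmul y z) = mmul (mmul x y) z;
  mmul1x : forall x, mmul mone x = x;
  mmulx1 : forall x, mmul x mone = x }.

Definition weval (S : Mnd) (w : list S) : S := List.fold_right (@mmul S) (@mone S) w.

Definition word_over (S : Mnd) (A : list S) (w : list S) : Prop :=
  List.Forall (fun a => List.In a A) w.

Definition mgenerates (S : Mnd) (A : list S) : Prop :=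
  forall x : S, exists w, word_over A w /\ weval w = x.

Definition is_group (S : Mnd) : Prop :=
  forall x : S, exists y : S, mmul x y = mone S /\ mmul y x = mone S.

(* d_A(x,y) = inf { |w| : w word over A, x w = y }, with inf of the empty set = +oo. *)
Definition mdist (R : realType) (S : Mnd) (A : list S) (x y : S) : \bar R :=
  ereal_inf [set ((size w)%:R)%:E | w in [set w : list S | word_over A w /\ mmul x (weval w) = y]].

Definition quasi_isometry (R : realType) (S T : Mnd) (A : list S) (B : list T)
    (f : S -> T) : Prop :=
  exists (lam eps mu : R), (1 <= lam)%R /\ (0 < eps)%R /\ (0 <= mu)%R /\
    (forall x y : S,
        (lam^-1)%:E * mdist R A x y - eps%:E <= mdist R B (f x) (f y) /\
        mdist R B (f x) (f y) <= lam%:E * mdist R A x y + eps%:E) /\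
    (forall t : T, exists x : S,
        maxe (mdist R B t (f x)) (mdist R B (f x) t) <= mu%:E).

Definition quasi_isometric (R : realType) (S T : Mnd) : Prop :=
  exists (A : list S) (B : list T) (f : S -> T),
    mgenerates A /\ mgenerates B /\ quasi_isometry R A B f.

Definition fin_generated (S : Mnd) : Prop := exists A : list S, mgenerates A.

From Pilot Require Import Defs.
From mathcomp Require Import all_boot all_order all_algebra.
From mathcomp Require Import all_classical all_reals.
From mathcomp Require Import ereal.
Import Order.TTheory GRing.Theory Num.Theory.
Local Open Scope classical_set_scope.
Local Open Scope ereal_scope.

(* In a group every distance [d_B(s,t)] is finite, since [s (s^-1 t) = t].
   The lower quasi-isometry bound then makes every [d_A(x,1)] finite in [M],
   i.e. every element of [M] has a right inverse, and a monoid in which every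
   element has a right inverse is a group. *)

Lemma mdist_fin_solvable (R : realType) (S : Mnd) (A : list S) (x y : S) :
  Defs.mdist R A x y != +oo -> exists z, mmul x z = y.
Proof.
move=> fin; apply: contrapT => nosol; move/eqP: fin; apply; rewrite /Defs.mdist.
suff -> : [set (((size w)%:R : R)%:E)
           | w in [set w : list S | word_over A w /\ mmul x (weval w) = y]] = set0.
  exact: ereal_inf0.
by apply/seteqP; split => // z [w [_ ew] _]; apply: nosol; exists (weval w).
Qed.

Lemma mdist_fin_group (R : realType) (G : Mnd) (B : list G) (s t : G) :
  is_group G -> mgenerates B -> Defs.mdist R B s t != +oo.
Proof.
move=> groupG genB; have [s' [ss' _]] := groupG s.
have [w [wB ew]] := genB (mmul s' t).
have : Defs.mdist R B s t <= ((size w)%:R)%:E.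
  by apply: ereal_inf_lbound; exists w => //; split => //;
    rewrite ew mmulA ss' mmul1x.
by case: (Defs.mdist R B s t).
Qed.

Lemma quasi_isometry_mdist_fin (R : realType) (S T : Mnd) (A : list S)
    (B : list T) (f : S -> T) (x y : S) :
  quasi_isometry R A B f ->
  Defs.mdist R B (f x) (f y) != +oo -> Defs.mdist R A x y != +oo.
Proof.
move=> [lam [eps [_ [lam1 [_ [_ [qi _]]]]]]] finB.
have [lower _] := qi x y; apply: contraNneq finB => infA.
have lam_inv_gt0 : (0 < lam^-1)%R by rewrite invr_gt0 (lt_le_trans ltr01).
by move: lower; rewrite infA gt0_muley ?lte_fin // leye_eq => /eqP.
Qed.

Lemma rinv_is_group (S : Mnd) :
  (forall x : S, exists y, mmul x y = mone S) -> is_group S.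
Proof.
move=> rinv x; have [y xy] := rinv x; have [z yz] := rinv y.
have xz : x = z by rewrite -[x]mmulx1 -yz mmulA xy mmul1x.
by exists y; rewrite xz in xy *.
Qed.

Theorem proposition8p1 (R : realType) (M G : Mnd) :
  fin_generated M -> fin_generated G -> is_group G ->
  quasi_isometric R M G -> is_group M.
Proof.
move=> _ _ groupG [A [B [f [_ [genB qif]]]]].
apply: rinv_is_group => x.
apply: (@mdist_fin_solvable R _ A).
apply: quasi_isometry_mdist_fin qif _.
exact: mdist_fin_group.
Qed.
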